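(* For every point set $X$ that is a permutation, $\mathrm{cGB}(X)\le \mathrm{WB}(X)+\mathrm{WB}'(X)$.
   Context: $X$ is a set of $n$ points that is a permutation, with $x$-coordinates $\{1,\dots,n\}$ and $y$-coordinates $\{1,\dots,n\}$; $B$ is a bounding box of $X$. Let $\mathcal L^V$ ($\mathcal L^H$) be the vertical (horizontal) lines with half-integral coordinate between $1/2$ and $n-1/2$. $\mathrm{WB}(X)$: for an ordering $\sigma$ of $\mathcal L^V$, process lines in order starting from $\{B\}$; each line $L$ splits the current vertical strip $S$ containing it and is charged the number of pairs of points of $X\cap S$ consecutive in increasing $y$-order that lie on opposite sides of $L$; $\mathrm{WB}_\sigma(X)$ is the total charge and $\mathrm{WB}(X)=\max_\sigma\mathrm{WB}_\sigma(X)$. $\mathrm{WB}'(X)$ is defined symmetrically with horizontal lines: for orderings of $\mathcal L^H$, each line splits the current horizontal strip containing it and is charged the number of pairs of points of the strip consecutive in increasing $x$-order lying on opposite sides; maximize over orderings (equivalently, $\mathrm{WB}'(X)=\mathrm{WB}$ of $X$ rotated by $90^\circ$). $\mathrm{cGB}(X)$: for an ordering $\sigma$ of $\mathcal L^V\cup\mathcal L^H$, start with $\mathcal P=\{B\}$ and process lines in order; when $L$ is processed every rectangle $P\in\mathcal P$ intersecting $L$ is replaced by the two rectangles into which $L$ splits it, costing the number of pairs of points of $X\cap P$ consecutive in increasing $y$-order (if $L$ vertical) or in increasing $x$-order (if $L$ horizontal) lying on opposite sides of $L$. $\mathrm{cGB}_\sigma(X)$ is the total cost and $\mathrm{cGB}(X)=\max_\sigma\mathrm{cGB}_\sigma(X)$.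 *)

From mathcomp Require Import all_boot perm.
Set Implicit Arguments. Unset Strict Implicit. Unset Printing Implicit Defensive.

(* A permutation point set X of size n is given by
   p : 'S_n ; its points are (i, p i) for i : 'I_n (0-indexed coordinates; the
   paper's point (x,y) with x,y in {1..n} corresponds to (x-1, y-1)).
   The paper's line with coordinate k + 1/2 (k = 0..n-1) is here the line with
   index k : 'I_n, separating coordinates < k from coordinates >= k.
   Lines: inl k = vertical line, inr k = horizontal line.
   A rectangle ((xl,xh),(yl,yh)) is the region containing exactly the grid
   coordinates xl <= x < xh, yl <= y < yh; line k meets its interior iff
   xl < k < xh (resp. yl < k < yh). *)

Section GB.
Variables (n : nat) (p : 'S_n).

Local Notation line := ((ordinal n) + (ordinal n))%type.
Definition rect := ((nat * nat) * (nat * nat))%type.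

Definition bbox : rect := ((0, n), (0, n)).

Definition inRect (r : rect) (i : 'I_n) : bool :=
  (r.1.1 <= i < r.1.2) && (r.2.1 <= p i < r.2.2).

Definition ycons (S : pred 'I_n) (a b : 'I_n) : bool :=
  [&& S a, S b, p a < p b & [forall c : 'I_n, S c ==> ~~ (p a < p c < p b)]].

Definition xcons (S : pred 'I_n) (a b : 'I_n) : bool :=
  [&& S a, S b, (a < b)%N & [forall c : 'I_n, S c ==> ~~ (a < c < b)]].

Definition costV (S : pred 'I_n) (k : nat) : nat :=
  #|[set ab : 'I_n * 'I_n | ycons S ab.1 ab.2 && ((ab.1 < k) != (ab.2 < k))]|.

Definition costH (S : pred 'I_n) (k : nat) : nat :=
  #|[set ab : 'I_n * 'I_n | xcons S ab.1 ab.2 && ((p ab.1 < k) != (p ab.2 < k))]|.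

Definition meets (L : line) (r : rect) : bool :=
  match L with
  | inl k => r.1.1 < k < r.1.2
  | inr k => r.2.1 < k < r.2.2
  end.

Definition cost (L : line) (r : rect) : nat :=
  if meets L r then
    match L with
    | inl k => costV (inRect r) k
    | inr k => costH (inRect r) k
    end
  else 0.

Definition split (L : line) (r : rect) : seq rect :=
  if meets L r then
    match L with
    | inl k => [:: ((r.1.1, val k), r.2); ((val k, r.1.2), r.2)]
    | inr k => [:: (r.1, (r.2.1, val k)); (r.1, (val k, r.2.2))]
    end
  else [:: r].

Fixpoint run (P : seq rect) (s : seq line) : nat :=
  match s with
  | [::] => 0
  | L :: s' => (\sum_(r <- P) cost L r) + run (flatten [seq split L r | r <- P]) s'
  end.

Definition cGB : nat :=
  \max_(sigma : {perm line}) run [:: bbox] [seq sigma L | L <- enum {: line}].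

(* WB: orderings of the vertical lines only; the current pieces are the
   vertical strips (full-height rectangles), each line splits the unique strip
   it meets and is charged the y-consecutive pairs of that strip it separates. *)
Definition WB : nat :=
  \max_(sigma : {perm 'I_n}) run [:: bbox] [seq inl (sigma k) | k <- enum 'I_n].

(* WB': the symmetric version with horizontal lines / horizontal strips and
   x-consecutive pairs. *)
Definition WB' : nat :=
  \max_(sigma : {perm 'I_n}) run [:: bbox] [seq inr (sigma k) | k <- enum 'I_n].

End GB.

(* Follow an arbitrary cGB ordering.  The vertical lines, taken in the order in
   which it processes them, form a WB ordering, and the horizontal ones a WB'
   ordering.  Throughout, every rectangle of the cGB partition lies in a strip
   of the WB partition (its vertical strip) and in a strip of the WB' partition
   (its horizontal strip).  A pair that is y-consecutive in a rectangle is still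
   y-consecutive in the vertical strip containing it, since the points of the
   strip between them in y-order would lie in the rectangle; and since the
   rectangles are disjoint, each pair is charged by at most one of them.  So a
   vertical line costs no more in cGB than in WB, and symmetrically a
   horizontal line costs no more than in WB'. *)

From Pilot Require Import Defs.
From mathcomp Require Import all_boot perm.
From mathcomp Require Import zify.

Set Implicit Arguments.
Unset Strict Implicit.
Unset Printing Implicit Defensive.

Lemma card_sum_mem (T : finType) (A : {set T}) : #|A| = \sum_t (t \in A : nat).
Proof. by rewrite -sum1_card big_mkcond; apply: eq_bigr => t _; case: (t \in A). Qed.

Section ChargedPairs.
Variables (R : eqType) (I T : finType).
Variables (inside : R -> pred I) (charged : R -> {set T}) (owner : T -> I).
Hypothesis charged_inside : forall r t, t \in charged r -> inside r (owner t).

Lemma sum_card_charged_le (P Q : seq R) (cover : R -> R) :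
    (forall i, \sum_(r <- P) (inside r i : nat) <= 1) ->
    {in P, forall r, cover r \in Q} ->
    (forall r, charged r \subset charged (cover r)) ->
  \sum_(r <- P) #|charged r| <= \sum_(q <- Q) #|charged q|.
Proof.
move=> disjP coverQ sub_cover.
under eq_bigr do rewrite card_sum_mem.
under [X in _ <= X]eq_bigr do rewrite card_sum_mem.
rewrite exchange_big [X in _ <= X]exchange_big /=; apply: leq_sum => t _.
have [[r rP tr] | noP] := altP (@hasP _ (fun r => t \in charged r) P); last first.
  by rewrite big1_seq // => r /andP[_ rP]; apply/eqP; rewrite eqb0; apply: (hasPn noP).
have covered : t \in charged (cover r) by apply: subsetP (sub_cover r) t tr.
apply: (@leq_trans 1).
  apply: leq_trans (disjP (owner t)); apply: leq_sum => r' _.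
  by case: (boolP (t \in _)) => // /charged_inside ->.
by rewrite (big_rem (cover r)) ?coverQ //= covered leq_addr.
Qed.

End ChargedPairs.

Lemma perm_pmap_enum (A B : finType) (f : A -> B) (g : B -> option A) (s : seq B) :
    pcancel f g -> ocancel g f -> uniq s -> (forall b, b \in s) ->
  perm_eq (pmap g s) (enum A).
Proof.
move=> fK gK us alls; apply: uniq_perm; rewrite ?enum_uniq ?(pmap_uniq gK) //.
by move=> a; rewrite mem_pmap mem_enum -fK map_f.
Qed.

Section StripDomination.
Variables (n : nat) (p : 'S_n).
Local Notation line := ((ordinal n) + (ordinal n))%type.
Local Notation inRect := (inRect p).
Local Notation cost := (cost p).
Local Notation run := (run p).
Local Notation split := (@Defs.split n).

Definition vstrip (r : rect) : rect := (r.1, (0, n)).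
Definition hstrip (r : rect) : rect := ((0, n), r.2).

Definition vline_index (L : line) : option 'I_n := if L is inl k then Some k else None.
Definition hline_index (L : line) : option 'I_n := if L is inr k then Some k else None.

Definition disjoint_rects (P : seq rect) := forall i, \sum_(r <- P) (inRect r i : nat) <= 1.

Lemma costVE k r : cost (inl k) r = costV p (inRect r) k.
Proof.
rewrite /cost /=; case: ifP => // r_off_k.
rewrite /costV; apply/esym/eqP; rewrite cards_eq0; apply/eqP/setP => -[a b].
rewrite !inE /=; case: (boolP (ycons _ _ _ _)) => //= /and4P[ra rb _ _].
move: ra rb r_off_k; rewrite /inRect => /andP[ra _] /andP[rb _].
by case: (a < k) / ltnP; case: (b < k) / ltnP => //=; lia.
Qed.

Lemma costHE k r : cost (inr k) r = costH p (inRect r) k.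
Proof.
rewrite /cost /=; case: ifP => // r_off_k.
rewrite /costH; apply/esym/eqP; rewrite cards_eq0; apply/eqP/setP => -[a b].
rewrite !inE /=; case: (boolP (xcons _ _ _)) => //= /and4P[ra rb _ _].
move: ra rb r_off_k; rewrite /inRect => /andP[_ ra] /andP[_ rb].
by case: (p a < k) / ltnP; case: (p b < k) / ltnP => //=; lia.
Qed.

Lemma ycons_vstrip r a b : ycons p (inRect r) a b -> ycons p (inRect (vstrip r)) a b.
Proof.
rewrite /inRect /= => /and4P[/andP[xa ya] /andP[xb yb] ab /forallP between].
rewrite /ycons /= !ltn_ord !andbT xa xb ab /=.
apply/forallP => c; rewrite ltn_ord andbT; apply/implyP => xc; apply/negP => /andP[ac cb].
move: (between c); rewrite xc ac cb /=.
case/andP: ya => ya _; case/andP: yb => _ yb.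
by rewrite (leq_trans ya (ltnW ac)) (ltn_trans cb yb).
Qed.

Lemma xcons_hstrip r a b : xcons (inRect r) a b -> xcons (inRect (hstrip r)) a b.
Proof.
rewrite /inRect /= => /and4P[/andP[xa ya] /andP[xb yb] ab /forallP between].
rewrite /xcons /= !ltn_ord ya yb ab /=.
apply/forallP => c; rewrite ltn_ord /=; apply/implyP => yc; apply/negP => /andP[ac cb].
move: (between c); rewrite yc ac cb /= andbT.
case/andP: xa => xa _; case/andP: xb => _ xb.
by rewrite (leq_trans xa (ltnW ac)) (ltn_trans cb xb).
Qed.

Lemma sum_cost_vline_le k P Q :
    disjoint_rects P -> {in P, forall r, vstrip r \in Q} ->
  \sum_(r <- P) cost (inl k) r <= \sum_(q <- Q) cost (inl k) q.
Proof.
move=> disjP stripQ; under eq_bigr do rewrite costVE.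
under [X in _ <= X]eq_bigr do rewrite costVE.
apply: (sum_card_charged_le (inside := inRect) (owner := fst) _ (cover := vstrip)) => //.
- by move=> r ab; rewrite inE => /andP[/and4P[]].
- by move=> r; apply/subsetP => ab; rewrite !inE => /andP[/ycons_vstrip -> ->].
Qed.

Lemma sum_cost_hline_le k P Q :
    disjoint_rects P -> {in P, forall r, hstrip r \in Q} ->
  \sum_(r <- P) cost (inr k) r <= \sum_(q <- Q) cost (inr k) q.
Proof.
move=> disjP stripQ; under eq_bigr do rewrite costHE.
under [X in _ <= X]eq_bigr do rewrite costHE.
apply: (sum_card_charged_le (inside := inRect) (owner := fst) _ (cover := hstrip)) => //.
- by move=> r ab; rewrite inE => /andP[/and4P[]].
- by move=> r; apply/subsetP => ab; rewrite !inE => /andP[/xcons_hstrip -> ->].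
Qed.

Lemma sum_inRect_split L r i :
  \sum_(r' <- split L r) (inRect r' i : nat) = inRect r i.
Proof.
rewrite /split /inRect; case: L => k /=; case: ifP => r_on_k;
  rewrite !big_cons big_nil ?addn0 //=.
- case: (r.2.1 <= p i < r.2.2); rewrite ?andbT ?andbF //; lia.
- case: (r.1.1 <= i < r.1.2); rewrite //=; lia.
Qed.

Lemma disjoint_split L P :
  disjoint_rects P -> disjoint_rects (flatten [seq split L r | r <- P]).
Proof.
move=> disjP i; rewrite big_flatten big_map /=.
under eq_bigr do rewrite sum_inRect_split; exact: disjP.
Qed.

Lemma vstrip_split_inl k r r' :
  r' \in split (inl k) r -> vstrip r' \in split (inl k) (vstrip r).
Proof.
by rewrite /split /=; case: ifP => _; rewrite !inE; [case/orP|]; move/eqP ->;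
  rewrite eqxx ?orbT.
Qed.

Lemma hstrip_split_inr k r r' :
  r' \in split (inr k) r -> hstrip r' \in split (inr k) (hstrip r).
Proof.
by rewrite /split /=; case: ifP => _; rewrite !inE; [case/orP|]; move/eqP ->;
  rewrite eqxx ?orbT.
Qed.

Lemma vstrip_split_inr k r r' : r' \in split (inr k) r -> vstrip r' = vstrip r.
Proof. by rewrite /split /=; case: ifP => _; rewrite !inE; [case/orP|]; move/eqP ->. Qed.

Lemma hstrip_split_inl k r r' : r' \in split (inl k) r -> hstrip r' = hstrip r.
Proof. by rewrite /split /=; case: ifP => _; rewrite !inE; [case/orP|]; move/eqP ->. Qed.

Lemma run_le_strips s P Qv Qh :
    disjoint_rects P -> {in P, forall r, vstrip r \in Qv} ->
    {in P, forall r, hstrip r \in Qh} ->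
  run P s <= run Qv (map inl (pmap vline_index s)) + run Qh (map inr (pmap hline_index s)).
Proof.
elim: s P Qv Qh => [|[] k s IH] P Qv Qh disjP stripQv stripQh //=.
- rewrite -addnA leq_add ?sum_cost_vline_le //.
  apply: IH; first exact: disjoint_split.
    move=> r' /flatten_mapP[r rP r'r]; apply/flatten_mapP.
    by exists (vstrip r); [exact: stripQv | exact: vstrip_split_inl].
  by move=> r' /flatten_mapP[r rP r'r]; rewrite (hstrip_split_inl r'r) stripQh.
- rewrite addnCA leq_add ?sum_cost_hline_le //.
  apply: IH; first exact: disjoint_split.
    by move=> r' /flatten_mapP[r rP r'r]; rewrite (vstrip_split_inr r'r) stripQv.
  move=> r' /flatten_mapP[r rP r'r]; apply/flatten_mapP.
  by exists (hstrip r); [exact: stripQh | exact: hstrip_split_inr].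
Qed.

Lemma run_le_max_perm (f : 'I_n -> line) (s : seq 'I_n) :
    perm_eq s (enum 'I_n) ->
  run [:: bbox n] (map f s) <=
    \max_(sigma : {perm 'I_n}) run [:: bbox n] [seq f (sigma k) | k <- enum 'I_n].
Proof.
rewrite -[enum 'I_n]/(val (ord_tuple n)) => /tuple_permP[sigma ->].
apply: leq_trans (leq_bigmax sigma); rewrite /= -map_comp.
by apply: eq_leq; congr run; apply: eq_map => i /=; rewrite tnth_ord_tuple.
Qed.

End StripDomination.

Theorem lemma5p2 (n : nat) (p : 'S_n) : (cGB p <= WB p + WB' p)%N.
Proof.
apply/bigmax_leqP => sigma _; set s := [seq sigma L | L <- _].
have s_uniq : uniq s by rewrite map_inj_uniq ?enum_uniq //; exact: perm_inj.
have s_full L : L \in s by rewrite -(permKV sigma L) map_f ?mem_enum.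
have bbox_disjoint : disjoint_rects p [:: bbox n].
  by move=> i; rewrite big_seq1 leq_b1.
apply: leq_trans
  (run_le_strips s bbox_disjoint (Qv := [:: bbox n]) (Qh := [:: bbox n]) _ _) _.
- by move=> r /[!inE] /eqP ->.
- by move=> r /[!inE] /eqP ->.
apply: leq_add; apply: run_le_max_perm.
- by apply: (perm_pmap_enum (f := inl)) => // -[].
- by apply: (perm_pmap_enum (f := inr)) => // -[].
Qed.
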